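(* Consider consecutive updates to $p_j$ at times $\tau_j<t$, and suppose that between times $\tau_j$ and $t$ there are updates to coordinates $k_1,\dots,k_m$ (repetitions allowed, none equal to $j$) at times $\beta_1<\dots<\beta_m$, with $\Delta p_{k_i}$ the change made by the update at time $\beta_i$ and $\Delta t_{k_i}$ the time elapsed since the previous update of that coordinate. Let $\tilde g_{j,\max}$ and $\tilde g_{j,\min}$ be the maximum and minimum of $\nabla_j\phi(p')$ over $p'\in P_j^{[\tau_j,t]}(p_j^t)$. For positive numbers $\eta_1,\dots,\eta_m$, let $\bar\eta_k=\min_{i:k_i=k}\eta_i$ for $k\ne j$ (with the convention $1/\bar\eta_k=0$ if no $i$ has $k_i=k$). Then for every real $\mu$, $$|\mu|\,(\tilde g_{j,\max}-\tilde g_{j,\min})\le 2\mu^2\sum_{k\ne j}\frac{1}{\bar\eta_k}H_{kj}^{[\tau_j,t]}(p_j^t)+\sum_{i=1}^m\eta_i\,H_{k_ij}^{[\beta_i,t]}(p_j^t)\frac{(\Delta p_{k_i})^2}{\Delta t_{k_i}},$$ and $$(\tilde g_{j,\max}-\tilde g_{j,\min})^2\le 8\Big(\sum_{i=1}^m\eta_i\,H_{k_ij}^{[\beta_i,t]}(p_j^t)\frac{(\Delta p_{k_i})^2}{\Delta t_{k_i}}\Big)\Big(\sum_{k\ne j}\frac{1}{\bar\eta_k}H_{kj}^{[\tau_j,t]}(p_j^t)\Big).$$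
   Context: Let $\phi:\mathbb{R}^n\to\mathbb{R}$ be twice continuously differentiable and convex. Asynchronous gradient descent runs in continuous time; each coordinate is changed only at discrete update times, no two updates occur simultaneously, and consecutive updates to the same coordinate are at most one time unit apart (so each elapsed time $\Delta t\le 1$). For $t_1\le t_2$ and real $s$, $P_j^{[t_1,t_2]}(s)$ denotes the box of points $p'$ with $p'_j=s$ and, for each $k\ne j$, $p'_k$ ranging over the closed interval spanned by the values $p_k^{t'}$ of coordinate $k$ for $t'\in[t_1,t_2]$ (where $p^{t'}$ is the current point at time $t'$). For $S\subseteq\mathbb{R}^n$, $H_{k\ell}(S)=\sup_{p'\in S}|\partial^2\phi/\partial p_k\partial p_\ell(p')|$, and $H_{k\ell}^{[t_1,t_2]}(s)=H_{k\ell}(P_\ell^{[t_1,t_2]}(s))$. *)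

From Stdlib Require Import Reals ClassicalEpsilon.
From mathcomp Require Import ssreflect ssrbool eqtype ssrnat fintype bigop.
Open Scope R_scope.

Definition vec (n : nat) := 'I_n -> R.

Definition upd {n} (p : vec n) (j : 'I_n) (s : R) : vec n :=
  fun k => if k == j then s else p k.

Definition has_partial {n} (f : vec n -> R) (j : 'I_n) (g : vec n -> R) : Prop :=
  forall p, derivable_pt_lim (fun s => f (upd p j s)) (p j) (g p).

Definition continuous_vec {n} (f : vec n -> R) : Prop :=
  forall p eps, 0 < eps -> exists delta, 0 < delta /\
    forall q : vec n, (forall k, Rabs (q k - p k) < delta) -> Rabs (f q - f p) < eps.

Definition C2_with {n} (phi : vec n -> R) (D1 : 'I_n -> vec n -> R)
    (D2 : 'I_n -> 'I_n -> vec n -> R) : Prop :=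
  continuous_vec phi /\
  (forall k, has_partial phi k (D1 k) /\ continuous_vec (D1 k)) /\
  (forall k l, has_partial (D1 k) l (D2 k l) /\ continuous_vec (D2 k l)).

Definition convex_fun {n} (phi : vec n -> R) : Prop :=
  forall (p q : vec n) (l : R), 0 <= l <= 1 ->
    phi (fun k => l * p k + (1 - l) * q k) <= l * phi p + (1 - l) * phi q.

(* Asynchronous process: U k s means "coordinate k is updated at time s";
   p s is the current point at time s, with the convention that p s is the
   point just BEFORE any update occurring at time s (left-continuous). *)
Definition async_process {n} (U : 'I_n -> R -> Prop) (p : R -> vec n) : Prop :=
  (forall k k' s, U k s -> U k' s -> k = k') /\
  (forall k a b, exists l : list R, forall s, a <= s <= b -> U k s -> List.In s l) /\
  (forall k a b, U k a -> U k b -> a < b -> (forall s, a < s < b -> ~ U k s) ->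
     b - a <= 1) /\
  (forall k a b, a <= b -> (forall s, a <= s < b -> ~ U k s) -> p b k = p a k).

Definition sup_R (E : R -> Prop) : R := epsilon (inhabits 0) (fun l => is_lub E l).
Definition inf_R (E : R -> Prop) : R := - sup_R (fun x => E (- x)).

(* x lies in the closed interval spanned by the values p t' k, t' in [t1,t2] *)
Definition in_span {n} (p : R -> vec n) (k : 'I_n) (t1 t2 x : R) : Prop :=
  (forall c, (forall t', t1 <= t' <= t2 -> p t' k <= c) -> x <= c) /\
  (forall c, (forall t', t1 <= t' <= t2 -> c <= p t' k) -> c <= x).

Definition box {n} (p : R -> vec n) (j : 'I_n) (t1 t2 s : R) : vec n -> Prop :=
  fun p' => p' j = s /\ forall k, k != j -> in_span p k t1 t2 (p' k).

Definition Hset {n} (D2 : 'I_n -> 'I_n -> vec n -> R) (k l : 'I_n)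
    (S : vec n -> Prop) : R :=
  sup_R (fun y => exists p', S p' /\ y = Rabs (D2 k l p')).

Definition Hbox {n} (D2 : 'I_n -> 'I_n -> vec n -> R) (p : R -> vec n)
    (k l : 'I_n) (t1 t2 s : R) : R :=
  Hset D2 k l (box p l t1 t2 s).

Definition max_over {n} (g : vec n -> R) (S : vec n -> Prop) : R :=
  sup_R (fun y => exists p', S p' /\ y = g p').
Definition min_over {n} (g : vec n -> R) (S : vec n -> Prop) : R :=
  inf_R (fun y => exists p', S p' /\ y = g p').

Definition inv_etabar {n m} (kk : 'I_m -> 'I_n) (eta : 'I_m -> R) (k : 'I_n) : R :=
  match [pick i | kk i == k] with
  | Some i0 => / (\big[Rmin/eta i0]_(i | kk i == k) eta i)
  | None => 0
  end.

From HB Require Import structures.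
From Coquelicot Require Import Coquelicot.
From Stdlib Require Import Reals Lra Classical ClassicalEpsilon.
From Stdlib Require Import FunctionalExtensionality PropExtensionality.
From mathcomp Require Import ssreflect ssrfun ssrbool eqtype ssrnat seq fintype bigop.
Open Scope R_scope.

(* Every point x of the box P_j^[tau,t](p_j^t) is joined to p^t by a staircase path whose
   i-th step changes only coordinate k_i, by at most |Delta p_{k_i}|, and stays inside
   P_j^[beta_i,t](p_j^t).  By the mean value theorem and the symmetry of second partial
   derivatives, grad_j phi changes by at most H_i |Delta p_{k_i}| along step i
   (H_i := H_{k_i j}^[beta_i,t](p_j^t)), so
   g_max - g_min <= 2 sum_i H_i |Delta p_{k_i}|.  AM-GM with weights eta_i / Delta t_{k_i}
   turns 2 |mu| H_i |Delta p_{k_i}| into the i-th term of the second sum plus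
   mu^2 H_i Delta t_{k_i} / eta_i; grouping the latter by coordinate, the elapsed times of
   one coordinate are disjoint intervals inside [tau - 1, t], so they add up to at most 2.
   The squared bound follows by choosing mu optimally. *)

Lemma upd_upd {n} (q : vec n) k s s' : upd (upd q k s) k s' = upd q k s'.
Proof. by apply: functional_extensionality => i; rewrite /upd; case: (i == k). Qed.

Lemma upd_eq {n} (q : vec n) k s : upd q k s k = s.
Proof. by rewrite /upd eqxx. Qed.

Lemma upd_neq {n} (q : vec n) k s i : i <> k -> upd q k s i = q i.
Proof. by move=> ik; rewrite /upd; case: eqP. Qed.

Lemma updC {n} (q : vec n) c j u v : c <> j ->
  upd (upd q c u) j v = upd (upd q j v) c u.
Proof.
move=> cj; apply: functional_extensionality => i; rewrite /upd.
by case: (eqVneq i j) => [->|_]; case: (eqVneq j c) => // jc; case: cj.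
Qed.

Lemma upd_id {n} (q : vec n) k : upd q k (q k) = q.
Proof. by apply: functional_extensionality => i; rewrite /upd; case: eqP => [->|]. Qed.

(** * Calculus on coordinate slices *)

Section Slice.
Context {n : nat}.
Variables (z : vec n) (c j : 'I_n).
Hypothesis cj : c <> j.

Definition slice (u v : R) : vec n := upd (upd z c u) j v.

Lemma slice_j u v : slice u v j = v.
Proof. exact: upd_eq. Qed.

Lemma slice_c u v : slice u v c = u.
Proof. by rewrite /slice upd_neq // upd_eq. Qed.

Lemma upd_slice_j u v s : upd (slice u v) j s = slice u s.
Proof. exact: upd_upd. Qed.

Lemma upd_slice_c u v s : upd (slice u v) c s = slice s v.
Proof. by rewrite /slice !(updC _ c j) // upd_upd. Qed.

Lemma is_derive_slice_j f g u v : has_partial f j g ->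
  is_derive (fun s => f (slice u s)) v (g (slice u v)).
Proof.
move=> fg; apply/is_derive_Reals.
have := fg (slice u v); rewrite slice_j.
by apply: derivable_pt_lim_ext => s; rewrite upd_slice_j.
Qed.

Lemma is_derive_slice_c f g u v : has_partial f c g ->
  is_derive (fun s => f (slice s v)) u (g (slice u v)).
Proof.
move=> fg; apply/is_derive_Reals.
have := fg (slice u v); rewrite slice_c.
by apply: derivable_pt_lim_ext => s; rewrite upd_slice_c.
Qed.

Lemma continuity_2d_slice f u v : continuous_vec f ->
  continuity_2d_pt (fun u v => f (slice u v)) u v.
Proof.
move=> fc eps; have [d [d0 fd]] := fc (slice u v) eps (cond_pos eps).
exists (mkposreal d d0) => u' v' /= du dv; apply: fd => i.
rewrite /slice /upd; case: (i == j) => //; case: (i == c) => //.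
by rewrite Rminus_diag Rabs_R0.
Qed.

End Slice.

Lemma C2_with_D2_sym {n} (phi : vec n -> R) D1 D2 (c j : 'I_n) (z : vec n) :
  C2_with phi D1 D2 -> c <> j -> D2 j c z = D2 c j z.
Proof.
move=> [_ [H1 H2]] cj.
pose P := slice z c j; pose f u v := phi (P u v).
have Dj u v : Derive (fun s => f u s) v = D1 j (P u v).
  exact/is_derive_unique/is_derive_slice_j/(H1 j).1.
have Dc u v : Derive (fun s => f s v) u = D1 c (P u v).
  exact/is_derive_unique/is_derive_slice_c/(H1 c).1.
have Djc u v : Derive (fun w => Derive (fun s => f w s) v) u = D2 j c (P u v).
  under Derive_ext do rewrite Dj.
  exact/is_derive_unique/is_derive_slice_c/(H2 j c).1.
have Dcj u v : Derive (fun w => Derive (fun s => f s w) u) v = D2 c j (P u v).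
  under Derive_ext do rewrite Dc.
  exact/is_derive_unique/is_derive_slice_j/(H2 c j).1.
have Pz : P (z c) (z j) = z by rewrite /P /slice !upd_id.
rewrite -Pz -Djc -Dcj; apply: Schwarz.
- exists (mkposreal 1 Rlt_0_1) => u v _ _; split; [|split; [|split]].
  + by eexists; apply: is_derive_slice_c (H1 c).1.
  + by eexists; apply: is_derive_slice_j (H1 j).1.
  + apply: (ex_derive_ext (fun w => D1 j (P w v))) => [w|]; first by rewrite Dj.
    by eexists; apply: is_derive_slice_c (H2 j c).1.
  + apply: (ex_derive_ext (fun w => D1 c (P u w))) => [w|]; first by rewrite Dc.
    by eexists; apply: is_derive_slice_j (H2 c j).1.
- apply: (continuity_2d_pt_ext (fun u v => D2 j c (P u v))) => [u v|].
    by rewrite Djc.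
  exact: continuity_2d_slice (H2 j c).2.
- apply: (continuity_2d_pt_ext (fun u v => D2 c j (P u v))) => [u v|].
    by rewrite Dcj.
  exact: continuity_2d_slice (H2 c j).2.
Qed.

Lemma D1_upd_dist_le {n} (phi : vec n -> R) D1 D2 (j c : 'I_n) (y : vec n) a b H :
  C2_with phi D1 D2 ->
  (forall s, Rmin a b <= s <= Rmax a b -> Rabs (D2 j c (upd y c s)) <= H) ->
  Rabs (D1 j (upd y c b) - D1 j (upd y c a)) <= H * Rabs (b - a).
Proof.
move=> [_ [_ H2]] HB.
have D s : derivable_pt_lim (fun s => D1 j (upd y c s)) s (D2 j c (upd y c s)).
  have := (H2 j c).1 (upd y c s); rewrite upd_eq.
  by apply: derivable_pt_lim_ext => s'; rewrite upd_upd.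
have mvt a' b' : a' < b' -> (forall s, a' <= s <= b' -> Rabs (D2 j c (upd y c s)) <= H) ->
    Rabs (D1 j (upd y c b') - D1 j (upd y c a')) <= H * Rabs (b' - a').
  move=> ab HB'; have [x [-> Hx]] := MVT_cor2 _ _ a' b' ab (fun x _ => D x).
  by rewrite Rabs_mult; apply: Rmult_le_compat_r; [apply: Rabs_pos | apply: HB'; lra].
case: (Rtotal_order a b) => [ab|[<-|ba]].
- by apply: mvt => // s Hs; apply: HB; rewrite Rmin_left ?Rmax_right; lra.
- by rewrite !Rminus_diag Rabs_R0; lra.
- rewrite -Rabs_Ropp -(Rabs_Ropp (b - a)) !Ropp_minus_distr.
  by apply: mvt => // s Hs; apply: HB; rewrite Rmin_right ?Rmax_left; lra.
Qed.

(** * Continuous functions are bounded on boxes *)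

Definition inbox {n} (l u z : vec n) := forall k, l k <= z k <= u k.

Lemma continuous_vec_Rabs {n} (f : vec n -> R) :
  continuous_vec f -> continuous_vec (fun z => Rabs (f z)).
Proof.
move=> fc q eps eps0; have [d [d0 fd]] := fc q eps eps0; exists d; split=> // z zq.
exact: Rle_lt_trans (Rabs_triang_inv2 _ _) (fd z zq).
Qed.

Fixpoint Tn_nth (n : nat) : Compactness.Tn n R -> nat -> R :=
  match n with
  | O => fun _ _ => 0
  | S n' => fun x i => if i is S i' then Tn_nth n' (snd x) i' else fst x
  end.

Fixpoint Tn_of (n : nat) (f : nat -> R) : Compactness.Tn n R :=
  match n with
  | O => tt
  | S n' => (f O, Tn_of n' (fun i => f (S i)))
  end.

Lemma Tn_nth_of n f i : (i < n)%N -> Tn_nth n (Tn_of n f) i = f i.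
Proof. by elim: n f i => [|n IH] f [|i] //= /IH ->. Qed.

Lemma bounded_n_of n (l u z : nat -> R) :
  (forall i, (i < n)%N -> l i <= z i <= u i) -> bounded_n n (Tn_of n l) (Tn_of n u) (Tn_of n z).
Proof.
elim: n l u z => [|n IH] l u z //= H; split; first exact: H.
by apply: IH => i; apply: (H i.+1).
Qed.

Lemma close_n_nth n d x y i :
  close_n n d x y -> (i < n)%N -> Rabs (Tn_nth n x i - Tn_nth n y i) < d.
Proof.
elim: n x y i => [|n IH] //= [x1 x2] [y1 y2] [|i] /= [? ?] //.
exact: IH.
Qed.

Definition vec_seq {n} (z : vec n) (i : nat) : R :=
  if insub i is Some k then z k else 0.

Lemma vec_seq_ord {n} (z : vec n) (k : 'I_n) : vec_seq z k = z k.
Proof. by rewrite /vec_seq valK. Qed.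

Lemma In_le_foldr_Rmax (T : Type) (g : T -> R) (L : list T) s :
  List.In s L -> g s <= foldr Rmax 0 (map g L).
Proof.
elim: L => [|x L IH] //= [->|/IH]; first exact: Rmax_l.
by move/Rle_trans; apply; apply: Rmax_r.
Qed.

Lemma continuous_bounded_inbox {n} (f : vec n -> R) (l u : vec n) :
  continuous_vec f -> exists M, forall z, inbox l u z -> Rabs (f z) <= M.
Proof.
move=> fc; pose pt (x : Compactness.Tn n R) : vec n := fun k => Tn_nth n x k.
have delta x : {d : posreal | forall z, (forall k, Rabs (z k - pt x k) < d) ->
                                         Rabs (f z - f (pt x)) < 1}.
  apply: constructive_indefinite_description.
  have [d [d0 Hd]] := fc (pt x) 1 Rlt_0_1; by exists (mkposreal d d0).
apply: NNPP => unbounded.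
apply: (compactness_list n (Tn_of n (vec_seq l)) (Tn_of n (vec_seq u))
                         (fun x => proj1_sig (delta x))).
move=> [L HL]; apply: unbounded.
exists (foldr Rmax 0 (map (fun x => Rabs (f (pt x)) + 1) L)) => z zlu.
have zbox : bounded_n n (Tn_of n (vec_seq l)) (Tn_of n (vec_seq u)) (Tn_of n (vec_seq z)).
  by apply: bounded_n_of => i iP; rewrite /vec_seq insubT; apply: zlu.
have [x [xL [_ zx]]] := HL _ zbox.
apply: (Rle_trans _ (Rabs (f (pt x)) + 1)); last first.
  exact: (In_le_foldr_Rmax _ (fun x => Rabs (f (pt x)) + 1) L x xL).
have zpt k : Rabs (z k - pt x k) < proj1_sig (delta x).
  by have := close_n_nth _ _ _ _ k zx (ltn_ord k); rewrite Tn_nth_of // vec_seq_ord.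
have := proj2_sig (delta x) z zpt; have := Rabs_triang_inv (f z) (f (pt x)); lra.
Qed.

Lemma sup_R_is_lub (E : R -> Prop) y0 M :
  (forall y, E y -> y <= M) -> E y0 -> is_lub E (sup_R E).
Proof.
move=> EM Ey0; have [s Hs] := completeness E (ex_intro _ M EM) (ex_intro _ y0 Ey0).
exact: epsilon_spec (inhabits 0) (fun l => is_lub E l) (ex_intro _ s Hs).
Qed.

Lemma max_over_is_lub {n} (g : vec n -> R) (S : vec n -> Prop) z M :
  (forall z, S z -> g z <= M) -> S z ->
  is_lub (fun y => exists z, S z /\ y = g z) (max_over g S).
Proof.
move=> gM Sz; apply: (sup_R_is_lub _ (g z) M); last by exists z.
by move=> _ [z' [Sz' ->]]; apply: gM.
Qed.

Lemma max_over_ge {n} (g : vec n -> R) (S : vec n -> Prop) z M :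
  (forall z, S z -> g z <= M) -> S z -> g z <= max_over g S.
Proof. by move=> gM Sz; apply: (max_over_is_lub _ _ _ _ gM Sz).1; exists z. Qed.

Lemma max_over_le {n} (g : vec n -> R) (S : vec n -> Prop) z M :
  (forall z, S z -> g z <= M) -> S z -> max_over g S <= M.
Proof.
move=> gM Sz; apply: (max_over_is_lub _ _ _ _ gM Sz).2.
by move=> _ [z' [Sz' ->]]; apply: gM.
Qed.

Lemma min_over_opp {n} (g : vec n -> R) (S : vec n -> Prop) :
  min_over g S = - max_over (fun z => - g z) S.
Proof.
rewrite /min_over /inf_R /max_over; do 2 f_equal.
apply: functional_extensionality => y; apply: propositional_extensionality.
by split=> -[z [Sz E]]; exists z; split=> //; lra.
Qed.

Lemma max_over_sub_min_over_le {n} (g : vec n -> R) (S : vec n -> Prop) x0 r :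
  S x0 -> (forall z, S z -> Rabs (g z - g x0) <= r) ->
  0 <= max_over g S - min_over g S <= 2 * r.
Proof.
move=> Sx0 gr; rewrite min_over_opp.
have near z : S z -> g x0 - r <= g z <= g x0 + r by move/gr/Rabs_le_between; lra.
have ub : forall z, S z -> g z <= g x0 + r by move=> z /near; lra.
have lb : forall z, S z -> - g z <= - g x0 + r by move=> z /near; lra.
have := max_over_ge _ _ _ _ ub Sx0; have := max_over_le _ _ _ _ ub Sx0.
have := max_over_ge _ _ _ _ lb Sx0; have := max_over_le _ _ _ _ lb Sx0.
lra.
Qed.

Lemma Rplus_assoc_law : associative Rplus.
Proof. by move=> a b c; rewrite Rplus_assoc. Qed.
HB.instance Definition _ := Monoid.isComLaw.Build R 0 Rplus Rplus_assoc_law Rplus_comm Rplus_0_l.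

Lemma Rsum_le (I : finType) (P : pred I) (F G : I -> R) :
  (forall i, P i -> F i <= G i) -> \big[Rplus/0]_(i | P i) F i <= \big[Rplus/0]_(i | P i) G i.
Proof. by move=> FG; apply: (big_ind2 (fun x y => x <= y)) => //; [lra | move=> *; lra]. Qed.

Lemma Rsum_ge0 (I : finType) (P : pred I) (F : I -> R) :
  (forall i, P i -> 0 <= F i) -> 0 <= \big[Rplus/0]_(i | P i) F i.
Proof. by move=> F0; apply: (big_ind (fun x => 0 <= x)) => //; [lra | move=> *; lra]. Qed.

Lemma Rsum_mulr (I : finType) (P : pred I) (F : I -> R) c :
  c * \big[Rplus/0]_(i | P i) F i = \big[Rplus/0]_(i | P i) (c * F i).
Proof. by apply: (big_rec2 (fun x y => c * x = y)) => [|i x y _ <-]; ring. Qed.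

Lemma Rsum_ltnS m (F : 'I_m -> R) (P : pred 'I_m) r (rm : (r < m)%N) :
  \big[Rplus/0]_(i < m | (i < r.+1)%N && P i) F i =
  \big[Rplus/0]_(i < m | (i < r)%N && P i) F i + (if P (Ordinal rm) then F (Ordinal rm) else 0).
Proof.
case Pr: (P (Ordinal rm)).
- rewrite (bigD1 (Ordinal rm)) /=; last by rewrite ltnSn Pr.
  rewrite Rplus_comm; congr (_ + _); apply: eq_bigl => i.
  rewrite -(inj_eq val_inj) /= ltnS [(i < r)%N]ltn_neqAle.
  by case: (i <= r)%N; case: (P i); case: (nat_of_ord i == r).
- rewrite Rplus_0_r; apply: eq_bigl => i.
  rewrite ltnS leq_eqVlt; case: (eqVneq (nat_of_ord i) r) => //= ir.
  by rewrite (_ : i = Ordinal rm) ?Pr ?andbF //; apply: val_inj.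
Qed.

Lemma bigRmin_seq_le (I : eqType) (s : seq I) (P : pred I) (F : I -> R) x0 r :
  r \in s -> P r -> \big[Rmin/x0]_(i <- s | P i) F i <= F r.
Proof.
elim: s => [|a s IH] //; rewrite in_cons big_cons => /orP [/eqP ->|rs] Pr.
- by rewrite Pr; apply: Rmin_l.
- case: (P a); last exact: IH.
  by apply: Rle_trans (Rmin_r _ _) _; apply: IH.
Qed.

Section NatRangeExtrema.
Variables (F : nat -> R) (m : nat).

Lemma bigRmin_nat_le r q : (r <= q <= m)%N -> \big[Rmin/F m]_(r <= i < m) F i <= F q.
Proof.
move Ek: (m - r)%N => k; elim: k r Ek => [|k IH] r Ek /andP [rq qm].
- have mr : (m <= r)%N by rewrite -subn_eq0 Ek.
  have -> : q = m by apply/eqP; rewrite eqn_leq qm (leq_trans mr rq).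
  by rewrite big_geq //; lra.
- have rm : (r < m)%N by rewrite -subn_gt0 Ek.
  rewrite big_ltn //; case: (eqVneq q r) => [->|qr]; first exact: Rmin_l.
  apply: Rle_trans (Rmin_r _ _) _; apply: IH; first by rewrite subnS Ek.
  by rewrite qm andbT ltn_neqAle eq_sym qr rq.
Qed.

Lemma bigRmin_nat_glb r C : (r <= m)%N -> (forall q, (r <= q <= m)%N -> C <= F q) ->
  C <= \big[Rmin/F m]_(r <= i < m) F i.
Proof.
move Ek: (m - r)%N => k; elim: k r Ek => [|k IH] r Ek rm CF.
- by rewrite big_geq; [apply: CF; rewrite rm leqnn | move/eqP: Ek; rewrite subn_eq0].
- have rm' : (r < m)%N by rewrite -subn_gt0 Ek.
  rewrite big_ltn //; apply: Rmin_glb; first by apply: CF; rewrite leqnn ltnW.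
  apply: IH => //; first by rewrite subnS Ek.
  by move=> q /andP [rq qm]; apply: CF; rewrite qm (ltnW rq).
Qed.

Lemma bigRmax_nat_opp r :
  \big[Rmax/F m]_(r <= i < m) F i = - \big[Rmin/- F m]_(r <= i < m) - F i.
Proof.
rewrite (big_morph Ropp Ropp_Rmin (erefl (- - F m))) Ropp_involutive.
by under [in RHS]eq_bigr do rewrite Ropp_involutive.
Qed.

End NatRangeExtrema.

Lemma bigRmax_nat_ge F m r q : (r <= q <= m)%N -> F q <= \big[Rmax/F m]_(r <= i < m) F i.
Proof.
by move=> rqm; rewrite bigRmax_nat_opp; have := bigRmin_nat_le (fun i => - F i) m r q rqm; lra.
Qed.

Lemma bigRmax_nat_lub F m r C : (r <= m)%N -> (forall q, (r <= q <= m)%N -> F q <= C) ->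
  \big[Rmax/F m]_(r <= i < m) F i <= C.
Proof.
move=> rm FC; rewrite bigRmax_nat_opp.
suff : - C <= \big[Rmin/- F m]_(r <= i < m) - F i by lra.
by apply: bigRmin_nat_glb => // q /FC; lra.
Qed.

Definition clamp (l h x : R) := Rmax l (Rmin h x).

Lemma clamp_in l h x : l <= h -> l <= clamp l h x <= h.
Proof. by rewrite /clamp /Rmax /Rmin; repeat case: Rle_dec; lra. Qed.

Lemma clamp_id l h x : l <= x <= h -> clamp l h x = x.
Proof. by rewrite /clamp /Rmax /Rmin; repeat case: Rle_dec; lra. Qed.

Lemma clamp_pt v x : clamp v v x = v.
Proof. by rewrite /clamp /Rmax /Rmin; repeat case: Rle_dec; lra. Qed.

Lemma clamp_widen a b l h x : l <= b <= h ->
  Rabs (clamp l h x - clamp (Rmin a l) (Rmax a h) x) <= Rabs (a - b).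
Proof.
move=> lbh; have := Rle_abs (a - b); have := Rle_abs (b - a).
rewrite Rabs_minus_sym /clamp /Rmax /Rmin => ab ba; apply: Rabs_le.
repeat case: Rle_dec; lra.
Qed.

(** * Epochs of the asynchronous process *)

Lemma box_mono {n} (p : R -> vec n) j t1 t2 t s z :
  t1 <= t2 -> box p j t2 t s z -> box p j t1 t s z.
Proof.
move=> t12 [zj zk]; split=> // k kj; have [hi lo] := zk k kj.
by split=> C HC; [apply: hi | apply: lo] => t' t'P; apply: HC; lra.
Qed.

Lemma box_current {n} (p : R -> vec n) j t1 t : t1 <= t -> box p j t1 t (p t j) (p t).
Proof. by move=> t1t; split=> // k _; split=> C HC; apply: HC; lra. Qed.

Section Epochs.
Context {n : nat} {U : 'I_n -> R -> Prop} {p : R -> vec n} {j : 'I_n} {tau t : R}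
  {m : nat} {kk : 'I_m -> 'I_n} {beta dp : 'I_m -> R}.
Hypothesis Hproc : async_process U p.
Hypothesis Htau : U j tau.
Hypothesis Htaut : tau < t.
Hypothesis Hbeta_sorted : forall i i' : 'I_m, (i < i')%N -> beta i < beta i'.
Hypothesis Hbeta_in : forall i, tau < beta i < t.
Hypothesis Hbeta_upd : forall i, U (kk i) (beta i).
Hypothesis Hbeta_all : forall k s, tau < s < t -> U k s -> exists i, kk i = k /\ beta i = s.
Hypothesis Hdp : forall i, exists eps, 0 < eps /\
  forall s, beta i < s < beta i + eps -> p s (kk i) = p (beta i) (kk i) + dp i.

(* Epoch [q] is the time interval (beta (q-1), beta q], read as [tau, beta 0] for
   [q = 0] and with [beta m := t]; no coordinate other than [j] moves inside it. *)
Definition epoch_end (q : nat) : R := if (insub q : option 'I_m) is Some i then beta i else t.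

Definition in_epoch (q : nat) (u : R) :=
  (if q is q'.+1 then epoch_end q' < u else tau <= u) /\ u <= epoch_end q.

Definition epoch_value (q : nat) : vec n := p (epoch_end q).

Lemma epoch_end_ord (i : 'I_m) : epoch_end i = beta i.
Proof. by rewrite /epoch_end valK. Qed.

Lemma epoch_end_last q : (m <= q)%N -> epoch_end q = t.
Proof. by move=> mq; rewrite /epoch_end insubN // -leqNgt. Qed.

Lemma epoch_end_range q : tau < epoch_end q <= t.
Proof. by rewrite /epoch_end; case: insubP => [i _ _|_]; [have := Hbeta_in i | ]; lra. Qed.

Lemma epoch_end_mono q1 q2 : (q1 <= q2)%N -> epoch_end q1 <= epoch_end q2.
Proof.
move=> q12; case: (ltnP q2 m) => q2m; last first.
  by rewrite (epoch_end_last _ q2m); have := epoch_end_range q1; lra.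
have q1m := leq_ltn_trans q12 q2m.
rewrite -[q1]/(val (Ordinal q1m)) -[q2]/(val (Ordinal q2m)) !epoch_end_ord.
case: (ltnP q1 q2) => [lt|ge]; first by left; apply: Hbeta_sorted.
rewrite (_ : Ordinal q1m = Ordinal q2m); first lra.
by apply: val_inj; apply/eqP; rewrite eqn_leq q12 ge.
Qed.

Lemma epoch_end_ltS q : (q < m)%N -> epoch_end q < epoch_end q.+1.
Proof.
move=> qm; rewrite -[q]/(val (Ordinal qm)) epoch_end_ord /epoch_end.
case: insubP => [i _ iq|_]; last by have := Hbeta_in (Ordinal qm); lra.
by apply: Hbeta_sorted; rewrite iq.
Qed.

Lemma no_update_in_epoch q c u : c <> j -> in_epoch q u -> u < epoch_end q -> ~ U c u.
Proof.
move=> cj [start _] uq Ucu.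
case: (Req_dec u tau) => [eu|nu].
- by subst; apply: cj; apply: (proj1 Hproc) Ucu Htau.
- have tut : tau < u < t.
    have := epoch_end_range q.
    by case: q start uq => [|q'] /= start uq; [|have := epoch_end_range q']; lra.
  have [i [_ ei]] := Hbeta_all c u tut Ucu; subst u; rewrite -epoch_end_ord in start uq.
  case: q start uq => [|q'] /= start uq; first by have := epoch_end_mono _ _ (leq0n i); lra.
  by case: (leqP i q') => /epoch_end_mono; lra.
Qed.

Lemma p_in_epoch q s c : c <> j -> in_epoch q s -> p s c = epoch_value q c.
Proof.
move=> cj qs; symmetry; apply: (proj2 (proj2 (proj2 Hproc))); first by case: qs.
move=> u [su ue]; apply: (no_update_in_epoch q) => //; split; last lra.
by case: q qs ue => [|q'] [start _] /= ue; lra.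
Qed.

Lemma p_epoch_value t' c : tau <= t' <= t -> c <> j ->
  exists q, (q <= m)%N /\ p t' c = epoch_value q c.
Proof.
move=> t't cj; suff gen q : (q <= m)%N -> t' <= epoch_end q ->
    exists q', (q' <= m)%N /\ p t' c = epoch_value q' c.
  by apply: (gen m) => //; rewrite epoch_end_last //; lra.
elim: q => [|q IH] qm t'q.
  by exists 0%N; split=> //; apply: p_in_epoch => //; split=> /=; lra.
case: (Rle_lt_dec t' (epoch_end q)) => t'q'; first exact: IH (ltnW qm) t'q'.
by exists q.+1; split=> //; apply: p_in_epoch.
Qed.

Lemma epoch_valueS (i : 'I_m) c : c <> j ->
  epoch_value i.+1 c = epoch_value i c + (if c == kk i then dp i else 0).
Proof.
move=> cj; have [eps [eps0 Heps]] := Hdp i.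
have lt := epoch_end_ltS _ (ltn_ord i); rewrite epoch_end_ord in lt.
pose s0 := Rmin (beta i + eps / 2) (epoch_end i.+1).
have s0P : beta i < s0 <= epoch_end i.+1 /\ s0 < beta i + eps.
  by rewrite /s0 /Rmin; case: Rle_dec; lra.
rewrite -(p_in_epoch i.+1 s0 c cj); last by rewrite /in_epoch epoch_end_ord; lra.
rewrite /epoch_value epoch_end_ord.
case: (eqVneq c (kk i)) => [->|cki]; first by rewrite Heps //; lra.
rewrite Rplus_0_r; apply: (proj2 (proj2 (proj2 Hproc))); first lra.
move=> u uP Ucu; case: (Req_dec u (beta i)) => [eu|nu].
- by subst; move/eqP: cki; apply; apply: (proj1 Hproc) Ucu (Hbeta_upd i).
- apply: (no_update_in_epoch i.+1 c u) => //; [rewrite /in_epoch epoch_end_ord | ]; lra.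
Qed.

Definition hull_lo c r := \big[Rmin/epoch_value m c]_(r <= q < m) epoch_value q c.
Definition hull_hi c r := \big[Rmax/epoch_value m c]_(r <= q < m) epoch_value q c.

Lemma hull_lo_le c r q : (r <= q <= m)%N -> hull_lo c r <= epoch_value q c.
Proof. exact: (bigRmin_nat_le (fun q => epoch_value q c)). Qed.

Lemma hull_hi_ge c r q : (r <= q <= m)%N -> epoch_value q c <= hull_hi c r.
Proof. exact: (bigRmax_nat_ge (fun q => epoch_value q c)). Qed.

Lemma hull_lo_hi c r : (r <= m)%N -> hull_lo c r <= hull_hi c r.
Proof. by move=> rm; apply: Rle_trans (hull_lo_le c r r _) (hull_hi_ge c r r _); rewrite leqnn. Qed.

Lemma hull_loS c r : (r < m)%N -> hull_lo c r = Rmin (epoch_value r c) (hull_lo c r.+1).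
Proof. exact: big_ltn. Qed.

Lemma hull_hiS c r : (r < m)%N -> hull_hi c r = Rmax (epoch_value r c) (hull_hi c r.+1).
Proof. exact: big_ltn. Qed.

Lemma box_in_hull s x c : box p j tau t s x -> c != j -> hull_lo c 0 <= x c <= hull_hi c 0.
Proof.
move=> [_ xb] cj; have [ub lb] := xb c cj; have cj' : c <> j by apply/eqP.
split; [apply: lb | apply: ub] => t' t'P; have [q [qm ->]] := p_epoch_value t' c t'P cj'.
- exact: hull_lo_le.
- exact: hull_hi_ge.
Qed.

Lemma hull_in_box r s z : (r <= m)%N -> z j = s ->
  (forall c, c != j -> hull_lo c r <= z c <= hull_hi c r) -> box p j (epoch_end r) t s z.
Proof.
move=> rm zj zh; split=> // c cj; have [zl zu] := zh c cj.
split=> C HC.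
- apply: Rle_trans zu _; apply: (bigRmax_nat_lub (fun q => epoch_value q c)) => // q /andP [rq qm].
  by apply: HC; have := epoch_end_mono _ _ rq; have := epoch_end_range q; lra.
- apply: Rle_trans zl; apply: (bigRmin_nat_glb (fun q => epoch_value q c)) => // q /andP [rq qm].
  by apply: HC; have := epoch_end_mono _ _ rq; have := epoch_end_range q; lra.
Qed.

Lemma continuous_bounded_box f s : continuous_vec f ->
  exists M, forall z, box p j tau t s z -> Rabs (f z) <= M.
Proof.
move=> fc; pose corner (h : 'I_n -> nat -> R) : vec n := fun k => if k == j then s else h k 0%N.
have [M HM] := continuous_bounded_inbox f (corner hull_lo) (corner hull_hi) fc.
exists M => z zb; apply: HM => k; rewrite /corner.
case: (eqVneq k j) => [->|kj]; last exact: box_in_hull zb kj.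
by rewrite (proj1 zb); lra.
Qed.

Lemma max_over_box_ge f t1 z : continuous_vec f -> tau <= t1 ->
  box p j t1 t (p t j) z -> f z <= max_over f (box p j t1 t (p t j)).
Proof.
move=> fc taut1 zb; have [M HM] := continuous_bounded_box f (p t j) fc.
apply: (max_over_ge _ _ _ M) zb => z' /(box_mono _ _ _ _ _ _ _ taut1)/HM.
by move/Rabs_le_between; lra.
Qed.

Lemma max_over_box_mono f t1 : continuous_vec f -> tau <= t1 <= t ->
  max_over f (box p j t1 t (p t j)) <= max_over f (box p j tau t (p t j)).
Proof.
move=> fc t1P; apply: (max_over_le _ _ (p t)); last by apply: box_current; lra.
move=> z /(box_mono _ _ _ _ _ _ _ (proj1 t1P)); apply: max_over_box_ge fc _; lra.
Qed.

Context {phi : vec n -> R} {D1 : 'I_n -> vec n -> R} {D2 : 'I_n -> 'I_n -> vec n -> R}.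
Hypothesis Hphi : C2_with phi D1 D2.
Hypothesis Hkk_ne : forall i, kk i <> j.

Lemma Hbox_ge k t1 z : tau <= t1 -> box p j t1 t (p t j) z ->
  Rabs (D2 k j z) <= Hbox D2 p k j t1 t (p t j).
Proof. exact/max_over_box_ge/continuous_vec_Rabs/(proj2 (proj2 Hphi) k j).2. Qed.

Lemma Hbox_ge0 k t1 : tau <= t1 <= t -> 0 <= Hbox D2 p k j t1 t (p t j).
Proof.
move=> t1P; apply: Rle_trans (Rabs_pos (D2 k j (p t))) _.
by apply: Hbox_ge; [lra | apply: box_current; lra].
Qed.

Lemma Hbox_mono k t1 : tau <= t1 <= t -> Hbox D2 p k j t1 t (p t j) <= Hbox D2 p k j tau t (p t j).
Proof. exact/max_over_box_mono/continuous_vec_Rabs/(proj2 (proj2 Hphi) k j).2. Qed.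

(* At step [r] every coordinate [k <> j] of [x] is clamped to the range of its values
   over the epochs [r..m]; step [i] then moves only coordinate [kk i], by at most
   [|dp i|], inside the box [P_j^[beta i, t]]. *)
Definition staircase (x : vec n) r : vec n :=
  fun k => if k == j then p t j else clamp (hull_lo k r) (hull_hi k r) (x k).

Lemma staircase_in x r k : (r <= m)%N -> k != j ->
  hull_lo k r <= staircase x r k <= hull_hi k r.
Proof. by move=> rm kj; rewrite /staircase (negbTE kj); apply/clamp_in/hull_lo_hi. Qed.

Lemma staircase_first x : box p j tau t (p t j) x -> staircase x 0 = x.
Proof.
move=> xb; apply: functional_extensionality => k; rewrite /staircase.
case: (eqVneq k j) => [->|kj]; first by rewrite (proj1 xb).
exact/clamp_id/(box_in_hull _ _ _ xb kj).
Qed.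

Lemma staircase_last x : staircase x m = p t.
Proof.
apply: functional_extensionality => k; rewrite /staircase.
case: (eqVneq k j) => [->|kj] //.
by rewrite /hull_lo /hull_hi !big_geq // clamp_pt /epoch_value epoch_end_last.
Qed.

Lemma staircaseS x (i : 'I_m) :
  staircase x i.+1 = upd (staircase x i) (kk i) (staircase x i.+1 (kk i)).
Proof.
apply: functional_extensionality => k; rewrite /upd.
case: (eqVneq k (kk i)) => [->|ki] //; rewrite /staircase.
case: (eqVneq k j) => // kj.
have same : epoch_value i.+1 k = epoch_value i k.
  by rewrite epoch_valueS ?(negbTE ki) ?Rplus_0_r //; apply/eqP.
rewrite (hull_loS k i) // (hull_hiS k i) // -same Rmin_right ?Rmax_right //.
- by apply: hull_hi_ge; rewrite leqnn ltn_ord.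
- by apply: hull_lo_le; rewrite leqnn ltn_ord.
Qed.

Lemma staircaseS_dist x (i : 'I_m) :
  Rabs (staircase x i.+1 (kk i) - staircase x i (kk i)) <= Rabs (dp i).
Proof.
have ij : kk i != j by apply/eqP.
have -> : Rabs (dp i) = Rabs (epoch_value i (kk i) - epoch_value i.+1 (kk i)).
  by rewrite epoch_valueS // eqxx -Rabs_Ropp; f_equal; ring.
rewrite /staircase (negbTE ij) (hull_loS _ i) // (hull_hiS _ i) //.
by apply: clamp_widen; split; [apply: hull_lo_le | apply: hull_hi_ge]; rewrite leqnn ltn_ord.
Qed.

Lemma staircase_segment_in_box x (i : 'I_m) s :
  let a := staircase x i (kk i) in let b := staircase x i.+1 (kk i) in
  Rmin a b <= s <= Rmax a b -> box p j (beta i) t (p t j) (upd (staircase x i) (kk i) s).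
Proof.
move=> a b sab; have ij : kk i != j by apply/eqP.
have im := ltnW (ltn_ord i).
rewrite -epoch_end_ord; apply: hull_in_box => //.
  by rewrite upd_neq; [rewrite /staircase eqxx | move=> E; apply: (Hkk_ne i); rewrite E].
move=> k kj; case: (eqVneq k (kk i)) => [->|ki]; last first.
  by rewrite upd_neq; [apply: staircase_in | apply/eqP].
rewrite upd_eq; have [a_lo a_hi] := staircase_in x i _ im ij.
have [b_lo b_hi] := staircase_in x i.+1 _ (ltn_ord i) ij.
have lo_le : hull_lo (kk i) i <= hull_lo (kk i) i.+1 by rewrite (hull_loS _ i) //; apply: Rmin_r.
have hi_ge : hull_hi (kk i) i.+1 <= hull_hi (kk i) i by rewrite (hull_hiS _ i) //; apply: Rmax_r.
have := Rmin_glb _ _ _ a_lo (Rle_trans _ _ _ lo_le b_lo).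
have := Rmax_lub _ _ _ a_hi (Rle_trans _ _ _ b_hi hi_ge).
rewrite /a /b in sab; lra.
Qed.

Lemma staircase_step x (i : 'I_m) :
  Rabs (D1 j (staircase x i) - D1 j (staircase x i.+1))
  <= Hbox D2 p (kk i) j (beta i) t (p t j) * Rabs (dp i).
Proof.
have betai := Hbeta_in i.
have -> : D1 j (staircase x i) =
  D1 j (upd (staircase x i) (kk i) (staircase x i (kk i))) by rewrite upd_id.
rewrite (staircaseS x i) Rabs_minus_sym.
apply: Rle_trans (D1_upd_dist_le phi D1 D2 j (kk i) _ _ _ _ Hphi _) _.
- move=> s sab; rewrite (C2_with_D2_sym phi D1 D2) //.
  by apply: (Hbox_ge _ (beta i)); [lra | exact: staircase_segment_in_box].
- by apply: Rmult_le_compat_l; [apply: Hbox_ge0; lra | apply: staircaseS_dist].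
Qed.

Lemma D1_box_dist x : box p j tau t (p t j) x ->
  Rabs (D1 j x - D1 j (p t))
  <= \big[Rplus/0]_(i < m) (Hbox D2 p (kk i) j (beta i) t (p t j) * Rabs (dp i)).
Proof.
move=> xb; set F := fun i : 'I_m => Hbox D2 p (kk i) j (beta i) t (p t j) * Rabs (dp i).
suff partial r : (r <= m)%N ->
    Rabs (D1 j x - D1 j (staircase x r)) <= \big[Rplus/0]_(i < m | (i < r)%N && true) F i.
  by have := partial m (leqnn m); rewrite staircase_last; under eq_bigl do rewrite ltn_ord.
elim: r => [|r IH] rm.
  by rewrite big_pred0 // staircase_first // Rminus_diag Rabs_R0; lra.
rewrite (Rsum_ltnS _ _ _ _ rm) /=.
have := staircase_step x (Ordinal rm); have := IH (ltnW rm).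
have := Rabs_triang (D1 j x - D1 j (staircase x r))
                    (D1 j (staircase x r) - D1 j (staircase x r.+1)).
have -> : D1 j x - D1 j (staircase x r) + (D1 j (staircase x r) - D1 j (staircase x r.+1))
  = D1 j x - D1 j (staircase x r.+1) by ring.
rewrite /F /=; lra.
Qed.

Lemma gradient_spread_le :
  0 <= max_over (D1 j) (box p j tau t (p t j)) - min_over (D1 j) (box p j tau t (p t j))
    <= 2 * \big[Rplus/0]_(i < m) (Hbox D2 p (kk i) j (beta i) t (p t j) * Rabs (dp i)).
Proof.
by apply: (max_over_sub_min_over_le _ _ (p t)); [apply: box_current; lra | apply: D1_box_dist].
Qed.

End Epochs.

(* The intervals [(prev i, beta i]] with [P i] are disjoint and lie in [(a - 1, b]]. *)
Lemma sum_gaps_le m (beta prev : 'I_m -> R) (P : pred 'I_m) a b : a <= b ->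
  (forall i i' : 'I_m, (i < i')%N -> beta i < beta i') -> (forall i, a < beta i <= b) ->
  (forall i, prev i < beta i <= prev i + 1) ->
  (forall i i', P i -> P i' -> ~ prev i' < beta i < beta i') ->
  \big[Rplus/0]_(i | P i) (beta i - prev i) <= b - a + 1.
Proof.
move=> ab sorted range gap disjoint.
suff partial N : (N <= m)%N -> forall E, a - 1 <= E ->
    (forall i : 'I_m, (i < N)%N -> P i -> beta i <= E) ->
    \big[Rplus/0]_(i : 'I_m | (i < N)%N && P i) (beta i - prev i) <= E - (a - 1).
  rewrite (eq_bigl (fun i : 'I_m => (i < m)%N && P i)) => [|i]; last by rewrite ltn_ord.
  by apply: Rle_trans (partial m (leqnn m) b _ (fun i _ _ => proj2 (range i))) _; lra.
elim: N => [|N IH] Nm E aE below; first by rewrite big_pred0 //; lra.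
rewrite (Rsum_ltnS _ _ _ _ Nm); set iN := Ordinal Nm.
case PN: (P iN); last first.
  rewrite Rplus_0_r; apply: (IH (ltnW Nm) E aE) => i iN' Pi.
  by apply: below Pi; apply: ltnW.
have := below iN (ltnSn N) PN; have := gap iN; have := range iN => rN gN bN.
suff : \big[Rplus/0]_(i : 'I_m | (i < N)%N && P i) (beta i - prev i) <= prev iN - (a - 1) by lra.
apply: (IH (ltnW Nm) (prev iN) ltac:(lra)) => i iN' Pi; apply: Rnot_lt_le => lt.
by apply: (disjoint i iN) => //; split=> //; apply: sorted.
Qed.

Section ElapsedTimes.
Context {n : nat} {U : 'I_n -> R -> Prop} {p : R -> vec n} {j : 'I_n} {tau t : R}
  {m : nat} {kk : 'I_m -> 'I_n} {beta prev : 'I_m -> R}.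
Hypothesis Hproc : async_process U p.
Hypothesis Htau : U j tau.
Hypothesis Ht : U j t.
Hypothesis Htaut : tau < t.
Hypothesis Hconsec : forall s, tau < s < t -> ~ U j s.
Hypothesis Hbeta_sorted : forall i i' : 'I_m, (i < i')%N -> beta i < beta i'.
Hypothesis Hbeta_in : forall i, tau < beta i < t.
Hypothesis Hbeta_upd : forall i, U (kk i) (beta i).
Hypothesis Hprev_upd : forall i, U (kk i) (prev i).
Hypothesis Hprev_lt : forall i, prev i < beta i.
Hypothesis Hprev_last : forall i s, prev i < s < beta i -> ~ U (kk i) s.

Lemma elapsed_time_pos_le1 i : 0 < beta i - prev i <= 1.
Proof.
have [_ [_ [gap _]]] := Hproc.
have := gap _ _ _ (Hprev_upd i) (Hbeta_upd i) (Hprev_lt i) (Hprev_last i).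
by have := Hprev_lt i; lra.
Qed.

Lemma sum_elapsed_times_le k : \big[Rplus/0]_(i | kk i == k) (beta i - prev i) <= 2.
Proof.
have range i : tau < beta i <= t by have := Hbeta_in i; lra.
have gap_le i : prev i < beta i <= prev i + 1 by have := elapsed_time_pos_le1 i; lra.
have disjoint i i' : kk i == k -> kk i' == k -> ~ prev i' < beta i < beta i'.
  move=> /eqP ki /eqP ki' [lt1 lt2]; apply: (Hprev_last i' (beta i)); first lra.
  by rewrite ki' -ki.
have := sum_gaps_le m beta prev _ tau t (Rlt_le _ _ Htaut) Hbeta_sorted range gap_le disjoint.
have [_ [_ [gap _]]] := Hproc; have := gap _ _ _ Htau Ht Htaut Hconsec; lra.
Qed.

End ElapsedTimes.

Lemma Rsum_by_class_le m n (kk : 'I_m -> 'I_n) j (F D : 'I_m -> R) (c : 'I_n -> R) M :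
  (forall i, kk i != j) -> (forall k, 0 <= c k) -> (forall i, F i <= c (kk i) * D i) ->
  (forall k, \big[Rplus/0]_(i | kk i == k) D i <= M) ->
  \big[Rplus/0]_(i < m) F i <= M * \big[Rplus/0]_(k < n | k != j) c k.
Proof.
move=> kkj c0 FcD DM; apply: Rle_trans (Rsum_le _ _ _ _ (fun i _ => FcD i)) _.
rewrite (partition_big kk (fun k => k != j)) // Rsum_mulr; apply: Rsum_le => k _.
rewrite (eq_bigr (fun i => c k * D i)) => [|i /eqP -> //].
by rewrite -Rsum_mulr Rmult_comm; apply: Rmult_le_compat_r; [apply: c0 | apply: DM].
Qed.

Lemma inv_etabar_ge0 n m (kk : 'I_m -> 'I_n) (eta : 'I_m -> R) k :
  (forall i, 0 < eta i) -> 0 <= inv_etabar kk eta k.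
Proof.
move=> eta0; rewrite /inv_etabar; case: pickP => [i0 _|_]; last lra.
apply/Rlt_le/Rinv_0_lt_compat/(big_ind (fun x => 0 < x)) => // x y x0 y0.
by rewrite /Rmin; case: Rle_dec.
Qed.

Lemma inv_etabar_ge n m (kk : 'I_m -> 'I_n) (eta : 'I_m -> R) i :
  (forall i, 0 < eta i) -> / eta i <= inv_etabar kk eta (kk i).
Proof.
move=> eta0; rewrite /inv_etabar; case: pickP => [i0 _|none]; last by have := none i; rewrite eqxx.
apply: Rinv_le_contravar; last by apply: bigRmin_seq_le; rewrite ?mem_index_enum.
apply: (big_ind (fun x => 0 < x)) => // x y x0 y0.
by rewrite /Rmin; case: Rle_dec.
Qed.

Lemma amgm_weighted mu d D e H : 0 < D -> 0 < e -> 0 <= H ->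
  2 * Rabs mu * (H * Rabs d) <= mu ^ 2 * (H * D / e) + e * H * d ^ 2 / D.
Proof.
move=> D0 e0 H0; rewrite -(pow2_abs mu) -(pow2_abs d).
have sq : 0 <= H * ((Rabs mu * D - e * Rabs d) ^ 2 / (e * D)).
  by apply: Rmult_le_pos => //; apply: Rdiv_le_0_compat; [apply: pow2_ge_0 | nra].
suff : Rabs mu ^ 2 * (H * D / e) + e * H * Rabs d ^ 2 / D - 2 * Rabs mu * (H * Rabs d)
     = H * ((Rabs mu * D - e * Rabs d) ^ 2 / (e * D)) by lra.
by field; lra.
Qed.

Lemma sq_le_of_abs_mul_le D A B : 0 <= D -> 0 <= B ->
  (forall mu, Rabs mu * D <= 2 * mu ^ 2 * B + A) -> D ^ 2 <= 8 * A * B.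
Proof.
move=> D0 B0 quad; have A0 : 0 <= A by have := quad 0; rewrite Rabs_R0; lra.
case: (Req_dec B 0) => [B00|Bn0].
  case: (Req_dec D 0) => [->|Dn0]; first by rewrite B00; lra.
  have := quad ((A + 1) / D); rewrite B00 Rabs_pos_eq; last by apply: Rdiv_le_0_compat; lra.
  by rewrite (_ : (A + 1) / D * D = A + 1); [lra | field].
have := quad (D / (4 * B)); rewrite Rabs_pos_eq; last by apply: Rdiv_le_0_compat; lra.
have -> : 2 * (D / (4 * B)) ^ 2 * B = D / (4 * B) * D / 2 by field; lra.
move=> h; have : D / (4 * B) * D <= 2 * A by lra.
have -> : D / (4 * B) * D = D ^ 2 / (4 * B) by field; lra.
move/(Rmult_le_compat_r (4 * B) _ _ ltac:(lra)).
by rewrite (_ : D ^ 2 / (4 * B) * (4 * B) = D ^ 2); [lra | field; lra].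
Qed.

Lemma Rsum_amgm m mu (H d D e : 'I_m -> R) :
  (forall i, 0 < D i) -> (forall i, 0 < e i) -> (forall i, 0 <= H i) ->
  2 * Rabs mu * \big[Rplus/0]_(i < m) (H i * Rabs (d i))
  <= mu ^ 2 * \big[Rplus/0]_(i < m) (H i * D i / e i)
     + \big[Rplus/0]_(i < m) (e i * H i * d i ^ 2 / D i).
Proof.
move=> D0 e0 H0; rewrite !Rsum_mulr -big_split.
by apply: Rsum_le => i _; apply: amgm_weighted.
Qed.

Lemma weight_term_le H Hmax D e c : 0 <= H <= Hmax -> 0 < D -> 0 < e -> / e <= c ->
  H * D / e <= c * Hmax * D.
Proof.
move=> HP D0 e0 ec; rewrite (_ : H * D / e = H * / e * D); last by field; lra.
apply: Rmult_le_compat_r; first lra.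
rewrite (Rmult_comm c); apply: Rmult_le_compat => //; try lra.
exact/Rlt_le/Rinv_0_lt_compat.
Qed.

Theorem mainTheorem3
  (n : nat) (phi : vec n -> R) (D1 : 'I_n -> vec n -> R)
  (D2 : 'I_n -> 'I_n -> vec n -> R)
  (U : 'I_n -> R -> Prop) (p : R -> vec n)
  (j : 'I_n) (tau t : R)
  (m : nat) (kk : 'I_m -> 'I_n) (beta prev dp eta : 'I_m -> R)
  (Hphi : C2_with phi D1 D2) (Hconv : convex_fun phi)
  (Hproc : async_process U p)
  (Htau : U j tau) (Ht : U j t) (Htaut : tau < t)
  (Hconsec : forall s, tau < s < t -> ~ U j s)
  (Hbeta_sorted : forall i i' : 'I_m, (i < i')%N -> beta i < beta i')
  (Hbeta_in : forall i, tau < beta i < t)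
  (Hbeta_upd : forall i, U (kk i) (beta i))
  (Hbeta_all : forall k s, tau < s < t -> U k s -> exists i, kk i = k /\ beta i = s)
  (Hkk_ne : forall i, kk i <> j)
  (* prev i: the previous update of coordinate kk i before beta i;
     Delta t_{k_i} = beta i - prev i *)
  (Hprev_upd : forall i, U (kk i) (prev i))
  (Hprev_lt : forall i, prev i < beta i)
  (Hprev_last : forall i s, prev i < s < beta i -> ~ U (kk i) s)
  (* dp i: the change made to coordinate kk i by the update at beta i *)
  (Hdp : forall i, exists eps, 0 < eps /\
           forall s, beta i < s < beta i + eps -> p s (kk i) = p (beta i) (kk i) + dp i)
  (Heta : forall i, 0 < eta i) :
  let gmax := max_over (D1 j) (box p j tau t (p t j)) in
  let gmin := min_over (D1 j) (box p j tau t (p t j)) in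
  let A := \big[Rplus/0]_(i < m)
             (eta i * Hbox D2 p (kk i) j (beta i) t (p t j)
                * (dp i) ^ 2 / (beta i - prev i)) in
  let B := \big[Rplus/0]_(k < n | k != j)
             (inv_etabar kk eta k * Hbox D2 p k j tau t (p t j)) in
  (forall mu : R, Rabs mu * (gmax - gmin) <= 2 * mu ^ 2 * B + A) /\
  (gmax - gmin) ^ 2 <= 8 * A * B.
Proof.
move=> gmax gmin A B.
have Hgap := elapsed_time_pos_le1 Hproc Hbeta_upd Hprev_upd Hprev_lt Hprev_last.
have Hb0 := Hbox_ge0 Hproc Htau Htaut Hbeta_sorted Hbeta_in Hbeta_all Hphi.
have Hb_mono := Hbox_mono Hproc Htau Htaut Hbeta_sorted Hbeta_in Hbeta_all Hphi.
have HH i : 0 <= Hbox D2 p (kk i) j (beta i) t (p t j) <= Hbox D2 p (kk i) j tau t (p t j).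
  by have := Hbeta_in i; split; [apply: Hb0 | apply: Hb_mono]; lra.
have spread := gradient_spread_le Hproc Htau Htaut Hbeta_sorted Hbeta_in Hbeta_upd Hbeta_all Hdp
  Hphi Hkk_ne.
have c0 k : 0 <= inv_etabar kk eta k * Hbox D2 p k j tau t (p t j).
  by apply: Rmult_le_pos; [apply: inv_etabar_ge0 | apply: Hb0; lra].
have weights : \big[Rplus/0]_(i < m)
    (Hbox D2 p (kk i) j (beta i) t (p t j) * (beta i - prev i) / eta i) <= 2 * B.
  apply: (Rsum_by_class_le m n kk j _ (fun i => beta i - prev i)) => // [i|i|k].
  - exact/eqP/Hkk_ne.
  - by apply: weight_term_le; [apply: HH | exact: (Hgap i).1 | apply: Heta | apply: inv_etabar_ge].
  - exact: (sum_elapsed_times_le Hproc Htau Ht Htaut Hconsec Hbeta_sorted Hbeta_in Hbeta_upd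
              Hprev_upd Hprev_lt Hprev_last).
have quad mu : Rabs mu * (gmax - gmin) <= 2 * mu ^ 2 * B + A.
  have amgm := Rsum_amgm m mu (fun i => Hbox D2 p (kk i) j (beta i) t (p t j)) dp
    (fun i => beta i - prev i) eta (fun i => (Hgap i).1) Heta (fun i => (HH i).1).
  have := Rmult_le_compat_l _ _ _ (Rabs_pos mu) (proj2 spread).
  have := Rmult_le_compat_l _ _ _ (pow2_ge_0 mu) weights.
  rewrite -/A in amgm; rewrite /gmax /gmin; lra.
split=> //; apply: sq_le_of_abs_mul_le => //; first by rewrite /gmax /gmin; lra.
exact: Rsum_ge0.
Qed.
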